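(* The utilization-based dynamic posted-price (UDPP) mechanism is ex post incentive compatible for myopic bidders and dominant-strategy incentive compatible for myopic miners.
   Context: Dynamic posted-price setting: at each time step a block with $m$ slots is produced by an active miner; $n$ bidders with private values $v_i\ge 0$ submit bids $b_i$, each participating only once. Given the current posted price $q>0$, the eligible set is $M(q)=\{i:b_i\ge q\}$. A block is a set $B\subseteq M(q)$ with $|B|\le m$; each $i\in B$ receives a slot and pays $q$. The next price is $T(q,B)$. The UDPP mechanism uses the random maximal (RM) allocation rule — the miner selects $B$ uniformly at random among subsets of $M(q)$ of size $\min\{m,|M(q)|\}$ — and the update rule $T_U(q,B)=\alpha\frac{|B|}{m}(1+\delta)q+(1-\alpha)q$ with $\alpha\in(0,1)$, $\delta\in(0,\infty)$. A myopic bidder's utility is $v_i-q$ if included and $0$ otherwise (in expectation over allocation randomness); ex post IC for myopic bidders means that, when the miner follows the RM rule, bidding $b_i=v_i$ weakly dominates every other bid for every bidder, for all bids of the others. A myopic miner's utility is the total payment $q|B|$ in the current block; DSIC for myopic miners means following the RM rule is a weakly dominant, utility-maximizing strategy for the miner for all bids. *)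

From HB Require Import structures.
From mathcomp Require Import all_boot all_order all_algebra.
Set Implicit Arguments. Unset Strict Implicit. Unset Printing Implicit Defensive.
Import Order.TTheory GRing.Theory Num.Theory.
Local Open Scope ring_scope.

Section UDPP.
Variables (R : realFieldType) (n : nat).

Definition bids := 'I_n -> R.

Definition upd_bid (b : bids) (i : 'I_n) (x : R) : bids :=
  fun j => if j == i then x else b j.

Definition eligible (b : bids) (q : R) : {set 'I_n} := [set i | q <= b i].

Definition feasible_block (m : nat) (b : bids) (q : R) (B : {set 'I_n}) : bool :=
  (B \subset eligible b q) && (#|B| <= m)%N.

(* support of the random maximal (RM) rule: subsets of M(q) of size min(m,|M(q)|) *)
Definition rm_blocks (m : nat) (b : bids) (q : R) : {set {set 'I_n}} :=
  [set B : {set 'I_n} | (B \subset eligible b q) && (#|B| == minn m #|eligible b q|)].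

(* expectation of f under the RM rule (uniform on rm_blocks) *)
Definition rm_expect (m : nat) (b : bids) (q : R) (f : {set 'I_n} -> R) : R :=
  (\sum_(B in rm_blocks m b q) f B) / #|rm_blocks m b q|%:R.

Definition bidder_util (q v : R) (i : 'I_n) (B : {set 'I_n}) : R :=
  if i \in B then v - q else 0.

Definition miner_util (q : R) (B : {set 'I_n}) : R := q * #|B|%:R.

Definition T_U (alpha delta : R) (m : nat) (q : R) (B : {set 'I_n}) : R :=
  alpha * (#|B|%:R / m%:R) * (1 + delta) * q + (1 - alpha) * q.

Definition RM_ex_post_IC_bidders (m : nat) (q : R) : Prop :=
  forall (v : bids), (forall i, 0 <= v i) ->
  forall (b : bids) (i : 'I_n) (x : R),
    rm_expect m (upd_bid b i x) q (bidder_util q (v i) i)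
    <= rm_expect m (upd_bid b i (v i)) q (bidder_util q (v i) i).

Definition RM_DSIC_miner (m : nat) (q : R) : Prop :=
  forall (b : bids) (B : {set 'I_n}), feasible_block m b q B ->
    miner_util q B <= rm_expect m b q (miner_util q).

End UDPP.

(** Under the random maximal rule the lottery faced by bidder [i] depends on
    her bid only through whether it reaches the posted price [q].  A bid below
    [q] yields utility [0]; any bid of at least [q] yields the same lottery as
    the truthful bid when [v i >= q], and that lottery only includes [i] at
    utility [v i - q >= 0]; when [v i < q] the truthful bid yields [0] and any
    inclusion is a loss.  For the miner, every RM block has size
    [minn m #|M(q)|], the largest size of any feasible block, so RM maximizes
    the payment [q * #|B|]. *)
From HB Require Import structures.
From mathcomp Require Import all_boot all_order all_algebra.
Set Implicit Arguments. Unset Strict Implicit. Unset Printing Implicit Defensive.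
Import Order.TTheory GRing.Theory Num.Theory.
Local Open Scope ring_scope.

Section RandomMaximal.
Variables (R : realFieldType) (n m : nat) (q : R).
Implicit Types (b : bids R n) (B : {set 'I_n}) (f : {set 'I_n} -> R).

Lemma rm_blocks_gt0 b : (0 < #|rm_blocks m b q|)%N.
Proof.
have /card_geqP[s [s_uniq s_size s_sub]] :
  (minn m #|eligible b q| <= #|eligible b q|)%N by rewrite geq_minr.
apply/card_gt0P; exists [set x in s]; rewrite inE; apply/andP; split.
  by apply/subsetP=> x; rewrite inE => /s_sub.
by rewrite cardsE (card_uniqP s_uniq) s_size.
Qed.

Lemma rm_block_eligible b B i : B \in rm_blocks m b q -> i \in B -> q <= b i.
Proof. by rewrite inE => /andP[/subsetP sub _] /sub; rewrite inE. Qed.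

Lemma rm_expect_const b f c :
  {in rm_blocks m b q, forall B, f B = c} -> rm_expect m b q f = c.
Proof.
move=> fc; rewrite /rm_expect (eq_bigr (fun _ => c)) // sumr_const.
by rewrite -[c *+ _]mulr_natr mulfK // pnatr_eq0 -lt0n rm_blocks_gt0.
Qed.

Lemma rm_expect_ge0 b f :
  {in rm_blocks m b q, forall B, 0 <= f B} -> 0 <= rm_expect m b q f.
Proof. by move=> f_ge0; rewrite /rm_expect divr_ge0 // sumr_ge0. Qed.

Lemma rm_expect_le0 b f :
  {in rm_blocks m b q, forall B, f B <= 0} -> rm_expect m b q f <= 0.
Proof.
move=> f_le0; rewrite -oppr_ge0 -mulNr -sumrN.
by apply: rm_expect_ge0 => B /f_le0; rewrite oppr_ge0.
Qed.

Lemma eq_rm_expect b1 b2 f :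
  eligible b1 q = eligible b2 q -> rm_expect m b1 q f = rm_expect m b2 q f.
Proof. by rewrite /rm_expect /rm_blocks => ->. Qed.

Lemma eligible_upd_bid b i x y :
  q <= x -> q <= y -> eligible (upd_bid b i x) q = eligible (upd_bid b i y) q.
Proof.
by move=> qx qy; apply/setP=> j; rewrite !inE /upd_bid; case: eqP; rewrite ?qx ?qy.
Qed.

Lemma bidder_util_truthful_ge0 b i v :
  0 <= rm_expect m (upd_bid b i v) q (bidder_util q v i).
Proof.
apply: rm_expect_ge0 => B /rm_block_eligible elig; rewrite /bidder_util.
by case: ifP => // /elig; rewrite /upd_bid eqxx subr_ge0.
Qed.

Lemma bidder_util_underbid b i v x :
  x < q -> rm_expect m (upd_bid b i x) q (bidder_util q v i) = 0.
Proof.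
move=> xq; apply: rm_expect_const => B /rm_block_eligible elig.
rewrite /bidder_util; case: ifP => // /elig.
by rewrite /upd_bid eqxx leNgt xq.
Qed.

Lemma bidder_util_low_value b i v :
  v < q -> rm_expect m b q (bidder_util q v i) <= 0.
Proof.
move=> vq; apply: rm_expect_le0 => B _; rewrite /bidder_util.
by case: ifP => // _; rewrite subr_le0 ltW.
Qed.

Lemma rm_truthful_bid_dominant b i v x :
  rm_expect m (upd_bid b i x) q (bidder_util q v i)
  <= rm_expect m (upd_bid b i v) q (bidder_util q v i).
Proof.
have [vq|qv] := ltP v q.
  exact: le_trans (bidder_util_low_value _ _ vq) (bidder_util_truthful_ge0 _ _ _).
have [xq|qx] := ltP x q.
  by rewrite bidder_util_underbid ?bidder_util_truthful_ge0.
by rewrite (eq_rm_expect _ (eligible_upd_bid b i qx qv)).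
Qed.

Lemma rm_expect_miner_util b :
  rm_expect m b q (miner_util q) = q * (minn m #|eligible b q|)%:R.
Proof.
by apply: rm_expect_const => B; rewrite inE /miner_util => /andP[_ /eqP ->].
Qed.

Lemma feasible_block_card b B :
  feasible_block m b q B -> (#|B| <= minn m #|eligible b q|)%N.
Proof. by case/andP=> sub cardB; rewrite leq_min cardB subset_leq_card. Qed.

Lemma rm_miner_util_max b B : 0 <= q -> feasible_block m b q B ->
  miner_util q B <= rm_expect m b q (miner_util q).
Proof.
move=> q_ge0 /feasible_block_card cardB.
by rewrite rm_expect_miner_util /miner_util ler_wpM2l // ler_nat.
Qed.

End RandomMaximal.

Theorem mainTheorem3 (R : realFieldType) (n m : nat) (alpha delta q : R) :
  (0 < m)%N -> 0 < alpha < 1 -> 0 < delta -> 0 < q ->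
  RM_ex_post_IC_bidders n m q /\ RM_DSIC_miner n m q.
Proof.
move=> _ _ _ q_gt0; split.
- by move=> v _ b i x; apply: rm_truthful_bid_dominant.
- by move=> b B; apply: rm_miner_util_max; rewrite ltW.
Qed.
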